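(* Pairwise statistical parity $PSP$ satisfies monotonicity but does not satisfy deepness. Here (for rankings $r$ of the full population $\mathcal D$, $n=|\mathcal D|$): monotonicity means that for every population $\mathcal D$, every ranking $r$ of $\mathcal D$ and positions $i<j$ with $r(i)\in G_0$, $r(j)\in G_1$ and $y(r(i))\le y(r(j))$, one has $PSP(r_{i\leftrightarrow j})>PSP(r)$; deepness means that for every population $\mathcal D$, every ranking $r$ of $\mathcal D$ and positions $i<j$ (with $j+1\le n$) such that $y(r(i))=y(r(j))$, $y(r(i+1))=y(r(j+1))$, and either ($r(i),r(j)\in G_0$ and $r(i+1),r(j+1)\in G_1$) or ($r(i),r(j)\in G_1$ and $r(i+1),r(j+1)\in G_0$), one has $|PSP(r)-PSP(r_{i\leftrightarrow i+1})|>|PSP(r)-PSP(r_{j\leftrightarrow j+1})|$.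
   Context: A population is a finite set $\mathcal{D}$ of candidates partitioned into two nonempty groups, a non-protected group $G_0$ and a protected group $G_1$; each candidate $d$ has a relevance score $y(d)\in\mathbb R$. A ranking of $\mathcal D$ is a bijection $r:\{1,\dots,n\}\to\mathcal D$, $n=|\mathcal D|$; $d\succ_r d'$ means $d$ is at a smaller position than $d'$; $r_{i\leftrightarrow j}$ is $r$ with the candidates at positions $i,j$ swapped. Pairwise statistical parity (defined only for rankings of the full population): $PSP(r)=\frac{|\{(d,d')\in G_0\times G_1: d'\succ_r d\}|-|\{(d,d')\in G_0\times G_1: d\succ_r d'\}|}{|G_0\times G_1|}$. *)

From HB Require Import structures.
From mathcomp Require Import all_boot all_order all_algebra.
From mathcomp Require Import reals.
Set Implicit Arguments. Unset Strict Implicit. Unset Printing Implicit Defensive.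
Import Order.TTheory GRing.Theory Num.Theory.
Local Open Scope ring_scope.

(* A population: a finite type T of candidates, with group membership
   [g : T -> bool] (g d = false : d in G0, non-protected;
   g d = true : d in G1, protected) and relevance scores y : T -> R. *)

(* A ranking of T: a bijection from positions 'I_n (0-based) onto T, n = #|T|. *)
Definition ranking (T : finType) (r : 'I_#|T| -> T) : Prop := bijective r.

Definition ranked_above (T : finType) (r : 'I_#|T| -> T) (d d' : T) : bool :=
  [exists i : 'I_#|T|, exists j : 'I_#|T|, [&& r i == d, r j == d' & (i < j)%N]].

Definition swap (T : finType) (r : 'I_#|T| -> T) (i j : 'I_#|T|) : 'I_#|T| -> T :=
  fun k => if k == i then r j else if k == j then r i else r k.

Definition PSP (R : realType) (T : finType) (g : T -> bool) (r : 'I_#|T| -> T) : R :=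
  ((#|[set p : T * T | [&& ~~ g p.1, g p.2 & ranked_above r p.2 p.1]]|%:R
    - #|[set p : T * T | [&& ~~ g p.1, g p.2 & ranked_above r p.1 p.2]]|%:R)
   / (#|[set p : T * T | ~~ g p.1 && g p.2]|)%:R).

Definition population (T : finType) (g : T -> bool) : Prop :=
  (exists d, ~~ g d) /\ (exists d, g d).

Definition monotone (R : realType) : Prop :=
  forall (T : finType) (g : T -> bool) (y : T -> R), population g ->
  forall r : 'I_#|T| -> T, ranking r ->
  forall i j : 'I_#|T|, (i < j)%N -> ~~ g (r i) -> g (r j) -> y (r i) <= y (r j) ->
  PSP R g (swap r i j) > PSP R g r.

Definition deep (R : realType) : Prop :=
  forall (T : finType) (g : T -> bool) (y : T -> R), population g ->
  forall r : 'I_#|T| -> T, ranking r ->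
  forall i j i1 j1 : 'I_#|T|, (i < j)%N ->
  val i1 = (val i).+1 -> val j1 = (val j).+1 ->
  y (r i) = y (r j) -> y (r i1) = y (r j1) ->
  ((~~ g (r i) /\ ~~ g (r j) /\ g (r i1) /\ g (r j1)) \/
   (g (r i) /\ g (r j) /\ ~~ g (r i1) /\ ~~ g (r j1))) ->
  `|PSP R g r - PSP R g (swap r i i1)| > `|PSP R g r - PSP R g (swap r j j1)|.

(** Write A(r) for the set of pairs (d, d') in G0 x G1 with d' ranked above d,
    and C = |G0 x G1|.  For a ranking, every pair of C is ordered one way or the
    other, so PSP(r) = (2 |A(r)| - C) / C and PSP is strictly increasing in
    |A(r)|.  Swapping a candidate of G0 at position i with a candidate of G1 at
    a later position j keeps every pair of A(r) in order and adds the pair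
    (r(i), r(j)), so PSP strictly increases.  When j = i + 1 that pair is the
    only change, so every such adjacent swap raises PSP by exactly 2 / C: two
    of them at different depths move PSP equally, contradicting deepness (take
    the ranking G0, G1, G0, G1 with constant scores). *)
From mathcomp Require Import all_boot all_order all_algebra reals perm.
From mathcomp Require Import zify ring lra.
Set Implicit Arguments. Unset Strict Implicit. Unset Printing Implicit Defensive.
Import Order.TTheory GRing.Theory Num.Theory.
Local Open Scope ring_scope.

Lemma val_tperm n (i j k : 'I_n) :
  val (tperm i j k) = if k == i then val j else if k == j then val i else val k.
Proof.
case: tpermP => [->|->|/eqP/negbTE -> /eqP/negbTE ->]; rewrite ?eqxx //.
by case: eqP => [->|].
Qed.

Lemma tperm_ltn n (i j k l : 'I_n) : (i < j)%N -> k != i -> l != j ->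
  (k < l)%N -> (tperm i j k < tperm i j l)%N.
Proof. by rewrite !val_tperm -!val_eqE; repeat case: eqP => /=; lia. Qed.

Lemma tperm_ltn_adj n (i j k l : 'I_n) : val j = (val i).+1 ->
  (k, l) != (i, j) -> (k < l)%N -> (tperm i j k < tperm i j l)%N.
Proof. by rewrite xpair_eqE !val_tperm -!val_eqE; repeat case: eqP => /=; lia. Qed.

Section Rankings.
Variable T : finType.
Local Notation n := #|T|.

Lemma ranked_aboveE (r : 'I_n -> T) h : cancel r h -> cancel h r ->
  forall d d', ranked_above r d d' = (h d < h d')%N.
Proof.
move=> rK hK d d'; apply/existsP/idP => [[k /existsP [l /and3P [/eqP <- /eqP <- kl]]]|lt].
  by rewrite !rK.
by exists (h d); apply/existsP; exists (h d'); rewrite !hK !eqxx.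
Qed.

Lemma swap_tperm (r : 'I_n -> T) i j k : swap r i j k = r (tperm i j k).
Proof.
rewrite /swap; case: tpermP => [->|->|/eqP/negbTE -> /eqP/negbTE ->]; rewrite ?eqxx //.
by case: eqP => [->|].
Qed.

Lemma swap_can (r : 'I_n -> T) h i j : cancel r h -> cancel h r ->
  cancel (swap r i j) (tperm i j \o h) /\ cancel (tperm i j \o h) (swap r i j).
Proof. by move=> rK hK; split => x /=; rewrite swap_tperm ?rK tpermK ?hK. Qed.

Lemma ranking_swap (r : 'I_n -> T) i j : ranking r -> ranking (swap r i j).
Proof. by case=> h rK hK; have [sK sK'] := swap_can i j rK hK; exists (tperm i j \o h). Qed.

Lemma ranked_above_swap (r : 'I_n -> T) h i j : cancel r h -> cancel h r ->
  forall d d', ranked_above (swap r i j) d d' = (tperm i j (h d) < tperm i j (h d'))%N.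
Proof. by move=> rK hK d d'; have [sK sK'] := swap_can i j rK hK; rewrite (ranked_aboveE sK sK'). Qed.

End Rankings.

Section PairwiseParity.
Variables (T : finType) (g : T -> bool).
Local Notation n := #|T|.

Definition mixed_pairs := [set p : T * T | ~~ g p.1 && g p.2].

Definition protected_above (r : 'I_n -> T) :=
  [set p : T * T | [&& ~~ g p.1, g p.2 & ranked_above r p.2 p.1]].

Lemma PSP_protected_above (R : realType) (r : 'I_n -> T) : ranking r ->
  PSP R g r = (2 * #|protected_above r|%:R - #|mixed_pairs|%:R) / #|mixed_pairs|%:R.
Proof.
case=> h rK hK.
set B := [set p : T * T | [&& ~~ g p.1, g p.2 & ranked_above r p.1 p.2]].
have partition_mixed : (#|protected_above r| + #|B| = #|mixed_pairs|)%N.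
  rewrite -cardsUI.
  have -> : protected_above r :&: B = set0.
    apply/setP => [[a b]]; rewrite !inE /= !(ranked_aboveE rK hK).
    by apply/negP => /andP [/and3P [_ _ ba] /and3P [_ _ ab]]; lia.
  have -> : protected_above r :|: B = mixed_pairs.
    apply/setP => [[a b]]; rewrite !inE /= !(ranked_aboveE rK hK).
    case ga: (g a) => //=; case gb: (g b) => //=.
    case: ltngtP => // /val_inj hab.
    by move: ga; rewrite -(hK a) -hab hK gb.
  by rewrite cards0 addn0.
rewrite /PSP -/(protected_above r) -/B -/mixed_pairs -partition_mixed natrD.
by congr (_ / _); ring.
Qed.

Section Swap.
Variables (r : 'I_n -> T) (h : T -> 'I_n) (i j : 'I_n).
Hypotheses (rK : cancel r h) (hK : cancel h r).
Hypotheses (gi : ~~ g (r i)) (gj : g (r j)).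

Lemma swapped_pair_protected_above : (i < j)%N ->
  (r i, r j) \in protected_above (swap r i j) :\: protected_above r.
Proof.
move=> ij; rewrite !inE /= (ranked_aboveE rK hK) (ranked_above_swap i j rK hK).
by rewrite !rK tpermL tpermR gi gj ij /= -leqNgt ltnW.
Qed.

Lemma protected_above_swap_sub : (i < j)%N ->
  protected_above r \subset protected_above (swap r i j).
Proof.
move=> ij; apply/subsetP => -[a b]; rewrite !inE /=.
rewrite (ranked_aboveE rK hK) (ranked_above_swap i j rK hK).
case/and3P => ga gb ba; rewrite ga gb; apply: tperm_ltn => //.
  by apply: contraTneq gb => hbi; rewrite -(hK b) hbi.
by apply: contraNneq ga => haj; rewrite -(hK a) haj.
Qed.

Lemma protected_above_swap_adj : val j = (val i).+1 ->
  protected_above (swap r i j) = (r i, r j) |: protected_above r.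
Proof.
move=> ji; have ij : (i < j)%N by rewrite ji.
have /setDP [pair_in _] := swapped_pair_protected_above ij.
apply/eqP; rewrite eqEsubset subUset sub1set pair_in (protected_above_swap_sub ij) !andbT.
apply/subsetP => -[a b]; rewrite !inE /=.
rewrite (ranked_aboveE rK hK) (ranked_above_swap i j rK hK).
case/and3P => ga gb ba; rewrite ga gb /=.
have [[hb ha]|ab_ij] := eqVneq (tperm i j (h b), tperm i j (h a)) (i, j).
  by rewrite -(hK a) -(hK b) -(tpermK i j (h a)) -(tpermK i j (h b)) ha hb tpermL tpermR eqxx.
by rewrite -(tpermK i j (h a)) -(tpermK i j (h b)) (tperm_ltn_adj ji ab_ij ba) orbT.
Qed.

Lemma PSP_swap_lt (R : realType) : (0 < #|mixed_pairs|)%N -> (i < j)%N ->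
  PSP R g r < PSP R g (swap r i j).
Proof.
move=> C_gt0 ij; have rr : ranking r by exists h.
have rs := ranking_swap i j rr.
rewrite !PSP_protected_above // ltr_pM2r ?invr_gt0 ?ltr0n //.
have : #|protected_above r|%:R < #|protected_above (swap r i j)|%:R :> R.
  have /setDP [pair_in pair_notin] := swapped_pair_protected_above ij.
  rewrite ltr_nat proper_card // properE protected_above_swap_sub //=.
  by apply: contra pair_notin => /subsetP; apply.
lra.
Qed.

Lemma PSP_swap_adj (R : realType) : val j = (val i).+1 ->
  PSP R g (swap r i j) = PSP R g r + 2 / #|mixed_pairs|%:R.
Proof.
move=> ji; have rr : ranking r by exists h.
have rs := ranking_swap i j rr.
have pair_notin : (r i, r j) \notin protected_above r.
  by have /setDP [] := swapped_pair_protected_above (eq_leq (esym ji)).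
rewrite !PSP_protected_above // protected_above_swap_adj //.
by rewrite cardsU1 pair_notin natrD mulr1n; ring.
Qed.

End Swap.
End PairwiseParity.

Lemma mixed_pairs_gt0 (T : finType) (g : T -> bool) : population g ->
  (0 < #|mixed_pairs g|)%N.
Proof.
by case=> -[d0 g0] [d1 g1]; apply/card_gt0P; exists (d0, d1); rewrite inE /= g0 g1.
Qed.

Lemma PSP_monotone (R : realType) : monotone R.
Proof.
move=> T g y pop r [h rK hK] i j ij gi gj _.
exact: PSP_swap_lt rK hK gi gj R (mixed_pairs_gt0 pop) ij.
Qed.

Lemma PSP_not_deep (R : realType) : ~ deep R.
Proof.
pose T := 'I_4; pose g (d : T) := odd d.
pose r : 'I_#|T| -> T := cast_ord (card_ord 4).
pose h : T -> 'I_#|T| := cast_ord (esym (card_ord 4)).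
have rK : cancel r h by move=> x; rewrite /r /h cast_ordK.
have hK : cancel h r by move=> x; rewrite /r /h cast_ordKV.
have pop : population g by split; [exists (inord 0) | exists (inord 1)]; rewrite /g inordK.
pose p k := h (inord k).
have pE k : r (p k) = inord k by rewrite /p hK.
have [p01 p23] : val (p 1%N) = (val (p 0%N)).+1 /\ val (p 3%N) = (val (p 2%N)).+1.
  by rewrite /p /= !inordK.
have [g0 g1 g2 g3] : [/\ ~~ g (r (p 0%N)), g (r (p 1%N)), ~~ g (r (p 2%N)) & g (r (p 3%N))].
  by rewrite !pE /g !inordK.
move/(_ T g (fun=> 0) pop r (Bijective rK hK) (p 0%N) (p 2%N) (p 1%N) (p 3%N)).
have p02 : (p 0%N < p 2%N)%N by rewrite /p /= !inordK.
move/(_ p02 p01 p23 erefl erefl (or_introl (conj g0 (conj g2 (conj g1 g3))))).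
by rewrite (PSP_swap_adj rK hK g0 g1 R p01) (PSP_swap_adj rK hK g2 g3 R p23) ltxx.
Qed.

Theorem theorem11 (R : realType) : monotone R /\ ~ deep R.
Proof. by split; [exact: PSP_monotone | exact: PSP_not_deep]. Qed.
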